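(* In every instance of the Balancing with Friendship game with $m=2$ machines: - every state minimizing the social cost is a strong Nash equilibrium; - every strong Nash equilibrium $\vec s$ satisfies $c(\vec s)\le\frac43c(\vec s^* )$.
   Context: An instance of the Balancing with Friendship (BwF) game consists of: - players $N=\{1,\dots,n\}$; - machines $M=\{1,\dots,m\}$; - a simple undirected graph $G=(N,E)$ (the friendship graph). A state is $\vec s\in M^n$, with $X_k(\vec s)=\{i:s_i=k\}$ and $x_k(\vec s)=|X_k(\vec s)|$. The cost of player $i$ with $s_i=k$ is $x_k(\vec s)$ plus the number of neighbours of $i$ in $G$ not on machine $k$. The social cost is $c(\vec s)=\sum_ic_i(\vec s)$, and $\vec s^*$ minimizes $c$. A state $\vec s$ is a strong Nash equilibrium if for every nonempty coalition $C\subseteq N$ and every joint deviation $\vec s_C'\in M^C$, some $i\in C$ has $c_i(\vec s)\le c_i(\vec s_C',\vec s_{-C})$. *)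

From mathcomp Require Import all_boot.
Set Implicit Arguments. Unset Strict Implicit. Unset Printing Implicit Defensive.

Definition simple_graph (n : nat) (e : rel 'I_n) : Prop :=
  symmetric e /\ irreflexive e.

Definition state (n m : nat) := {ffun 'I_n -> 'I_m}.

Definition load n m (s : state n m) (k : 'I_m) : nat := #|[set i | s i == k]|.

Definition pcost n m (e : rel 'I_n) (s : state n m) (i : 'I_n) : nat :=
  load s (s i) + #|[set j | e i j & s j != s i]|.

Definition scost n m (e : rel 'I_n) (s : state n m) : nat :=
  \sum_(i < n) pcost e s i.

Definition social_optimum n m (e : rel 'I_n) (s : state n m) : Prop :=
  forall s' : state n m, scost e s <= scost e s'.

Definition deviate n m (s : state n m) (C : {set 'I_n}) (s' : state n m)
  : state n m := [ffun i => if i \in C then s' i else s i].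

Definition strong_NE n m (e : rel 'I_n) (s : state n m) : Prop :=
  forall (C : {set 'I_n}) (s' : state n m), C != set0 ->
    exists2 i, i \in C & pcost e s i <= pcost e (deviate s C s') i.

From mathcomp Require Import all_boot zify.
Set Implicit Arguments. Unset Strict Implicit. Unset Printing Implicit Defensive.

(* Call two players a cut pair of a state when they are not friends and sit
   on different machines.  A player's cost plus its number of cut partners is
   always n, so the social cost is n^2 minus the number [cut] of ordered cut
   pairs: minimizing the social cost means maximizing [cut].
   With two machines, moving a set of players changes [cut] only through the
   pairs containing exactly one mover ([cut_exchange]).  Hence a deviation in
   which every mover strictly gains increases [cut], so a social optimum is a
   strong equilibrium.  For the ratio, an induction driven by strong stability
   shows that, against a strong equilibrium s, every state t satisfies
   cut t <= cut s + (cut pairs of s inside the set where t and s differ)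
   ([strong_NE_cut_bound]).  Applied to an optimum and to its copy with the
   two machines swapped, whose sets of differing players are complementary,
   this gives 2 cut opt <= 3 cut s; with 2 cut opt <= n^2 it yields
   3 c(s) <= 4 c(opt). *)

Lemma card_indicator (T : finType) (A : {pred T}) : #|A| = \sum_(x : T) (x \in A : nat).
Proof. by rewrite -sum1_card big_mkcond /=; apply: eq_bigr => x _; case: (x \in A). Qed.

Section CutDegree.
Variables (n m : nat) (e : rel 'I_n).

Definition cross (s : state n m) (i j : 'I_n) : nat := ~~ e i j && (s i != s j).
Definition cut_deg (s : state n m) (i : 'I_n) : nat := \sum_(j < n) cross s i j.
Definition cut (s : state n m) : nat := \sum_(i < n) cut_deg s i.

(* Every other player is on i's machine, a friend elsewhere, or a cut partner. *)
Lemma pcost_cut_deg (s : state n m) (i : 'I_n) : pcost e s i + cut_deg s i = n.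
Proof.
rewrite /pcost /load /cut_deg !card_indicator -!big_split /=.
rewrite -[RHS]card_ord -sum1_card; apply: eq_bigr => j _.
by rewrite !inE /cross eq_sym; case: (s i == s j); case: (e i j).
Qed.

Lemma scost_cut (s : state n m) : scost e s + cut s = n * n.
Proof.
rewrite /scost /cut -big_split /= (eq_bigr (fun=> n)) => [|i _].
  by rewrite sum_nat_const card_ord.
exact: pcost_cut_deg.
Qed.

Hypothesis e_sym : symmetric e.

Lemma cross_sym (s : state n m) (i j : 'I_n) : cross s i j = cross s j i.
Proof. by rewrite /cross e_sym eq_sym. Qed.

Lemma cross_weighted (s : state n m) (P : pred 'I_n) :
  \sum_(i < n) \sum_(j < n) (P i + P j) * cross s i j = 2 * \sum_(i | P i) cut_deg s i.
Proof.
have row : \sum_(i < n) \sum_(j < n) P i * cross s i j = \sum_(i | P i) cut_deg s i.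
  rewrite [RHS]big_mkcond /=; apply: eq_bigr => i _; rewrite /cut_deg.
  by case: (P i); [under eq_bigr do rewrite mul1n | rewrite big1 // => j _].
rewrite (eq_bigr (fun i => \sum_(j < n) P i * cross s i j + \sum_(j < n) P j * cross s i j));
  last by move=> i _; rewrite -big_split; apply: eq_bigr => j _; rewrite mulnDl.
have col : \sum_(i < n) \sum_(j < n) P j * cross s i j = \sum_(i | P i) cut_deg s i.
  rewrite -row exchange_big /=.
  by apply: eq_bigr => j _; apply: eq_bigr => i _; rewrite cross_sym.
by rewrite big_split /= row col addnn mul2n.
Qed.

Definition cut_within (s : state n m) (Y : {set 'I_n}) : nat :=
  \sum_(i in Y) \sum_(j in Y) cross s i j.

Lemma cut_within_compl (s : state n m) (Y : {set 'I_n}) :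
  cut_within s Y + cut_within s (~: Y) <= cut s.
Proof.
have part A : cut_within s A <= \sum_(i in A) cut_deg s i.
  apply: leq_sum => i _; rewrite /cut_deg [X in _ <= X](bigID (mem A)) /=.
  exact: leq_addr.
rewrite /cut (bigID (mem Y)) /= leq_add ?part //.
by apply: (leq_trans (part _)); rewrite (eq_bigl (fun i => i \notin Y)) // => i; rewrite inE.
Qed.

Lemma cut_within_setD1 (s : state n m) (Y : {set 'I_n}) (z : 'I_n) : z \in Y ->
  cut_within s Y = cut_within s (Y :\ z) + 2 * \sum_(j in Y :\ z) cross s z j.
Proof.
move=> Yz; rewrite /cut_within (big_setD1 z Yz) (big_setD1 z Yz) /=.
have -> : cross s z z = 0 by rewrite /cross eqxx andbF.
have -> : \sum_(i in Y :\ z) \sum_(j in Y) cross s i j =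
          \sum_(i in Y :\ z) (cross s z i + \sum_(j in Y :\ z) cross s i j).
  by apply: eq_bigr => i _; rewrite (big_setD1 z Yz) cross_sym.
by rewrite big_split /= add0n addnA addnn -mul2n addnC.
Qed.
End CutDegree.

Lemma I2_cases (a : 'I_2) : a = ord0 \/ a = ord_max.
Proof. by case: a => [[|[|k]] Hk]; [left|right|]; try apply: val_inj. Qed.

Lemma separation_kept (a b a' b' : 'I_2) :
  (a' == a) = (b' == b) -> (a' != b') = (a != b).
Proof.
by case: (I2_cases a) => ->; case: (I2_cases b) => ->;
   case: (I2_cases a') => ->; case: (I2_cases b') => ->.
Qed.

Definition swap (a : 'I_2) : 'I_2 := if a == ord0 then ord_max else ord0.

Lemma swap_sep (a b : 'I_2) : (swap a != swap b) = (a != b).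
Proof. by case: (I2_cases a) => ->; case: (I2_cases b) => ->. Qed.

Lemma swap_neq (a b : 'I_2) : (swap a != b) = (a == b).
Proof. by case: (I2_cases a) => ->; case: (I2_cases b) => ->. Qed.

Section TwoMachines.
Variables (n : nat) (e : rel 'I_n).
Hypothesis e_sym : symmetric e.

(* Flip identity: going from [s] to [t], the cut changes only through pairs
   with exactly one mover, which is twice the change of the movers' cut
   degrees. *)
Lemma cut_exchange (s t : state n 2) :
  cut e t + 2 * \sum_(i | t i != s i) cut_deg e s i =
  cut e s + 2 * \sum_(i | t i != s i) cut_deg e t i.
Proof.
rewrite -!(cross_weighted e_sym) /cut /cut_deg -!big_split /=.
apply: eq_bigr => i _; rewrite -!big_split /=; apply: eq_bigr => j _.
case: (eqVneq (t i != s i) (t j != s j)) => [same | differ].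
  by rewrite /cross (@separation_kept (s i) (s j) (t i) (t j)) //; apply: negb_inj.
have -> : (t i != s i) + (t j != s j) = 1.
  by move: differ; case: (t i != s i); case: (t j != s j).
by rewrite !mul1n addnC.
Qed.

Lemma improvement_lowers_cost (s t : state n 2) :
  t != s -> (forall i, t i != s i -> cut_deg e s i < cut_deg e t i) ->
  scost e t < scost e s.
Proof.
move=> t_neq_s better.
have [i0 moved0] : exists i, t i != s i.
  case: (pickP (fun i => t i != s i)) => [i Hi | stay]; first by exists i.
  by case/eqP: t_neq_s; apply/ffunP => i; apply/eqP/negbFE/stay.
have gain : \sum_(i | t i != s i) cut_deg e s i < \sum_(i | t i != s i) cut_deg e t i.
  rewrite (bigD1 i0) //= [X in _ < X](bigD1 i0) //= -addSn leq_add ?better //.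
  by apply: leq_sum => i /andP [Hi _]; exact/ltnW/better.
have := cut_exchange s t; have := scost_cut e s; have := scost_cut e t.
lia.
Qed.

(* First claim: no coalition can deviate with all members strictly gaining,
   because the deviation would strictly lower the optimal social cost. *)
Lemma optimum_is_strong_NE (s : state n 2) : social_optimum e s -> strong_NE e s.
Proof.
move=> opt C s' /set0Pn [i0 Ci0]; set t := deviate s C s'.
case: (boolP [exists i in C, pcost e s i <= pcost e t i]) => [/exists_inP // | ].
rewrite negb_exists_in => /forall_inP worse; exfalso.
have better i : i \in C -> cut_deg e s i < cut_deg e t i.
  move=> Ci; have := worse i Ci; rewrite -ltnNge.
  by have := pcost_cut_deg e s i; have := pcost_cut_deg e t i; lia.
have only_C_moves i : t i != s i -> i \in C.
  by apply: contraNT => notCi; rewrite /t /deviate ffunE (negbTE notCi).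
have t_neq_s : t != s.
  by apply: contraTneq (better i0 Ci0) => ->; rewrite ltnn.
have := improvement_lowers_cost t_neq_s (fun i Hi => better i (only_C_moves i Hi)).
by rewrite ltnNge opt.
Qed.

Lemma single_move_cut (t t' : state n 2) (z : 'I_n) :
  (forall i, i != z -> t' i = t i) -> t' z != t z ->
  cut e t' + 2 * cut_deg e t z = cut e t + 2 * cut_deg e t' z.
Proof.
move=> others moved; have := cut_exchange t t'.
by rewrite !(eq_bigl (pred1 z)) ?big_pred1_eq // => i /=;
  case: (eqVneq i z) => [-> | /others ->]; rewrite ?moved ?eqxx.
Qed.

Definition revert (s t : state n 2) (z : 'I_n) : state n 2 :=
  [ffun i => if i == z then s z else t i].

Lemma movers_revert (s t : state n 2) (z : 'I_n) :
  [set i | revert s t z i != s i] = [set i | t i != s i] :\ z.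
Proof.
apply/setP => i; rewrite !inE ffunE.
by case: (eqVneq i z) => [->| //]; rewrite eqxx.
Qed.

Lemma cut_revert (s t : state n 2) (z : 'I_n) :
  let M := [set i | t i != s i] in
  z \in M -> cut_deg e t z <= cut_deg e s z ->
  cut e t <= cut e (revert s t z) + 2 * \sum_(j in M :\ z) cross e s z j.
Proof.
move=> M Mz no_gain; set t' := revert s t z.
have others i : i != z -> t' i = t i by rewrite ffunE => /negbTE ->.
have moved : t' z != t z by rewrite ffunE eqxx eq_sym; move: Mz; rewrite inE.
have t'_off i : i \notin M :\ z -> t' i = s i.
  by rewrite ffunE !inE; case: (eqVneq i z) => [-> // | _] /=; rewrite negbK => /eqP.
have outside : \sum_(j | j \notin M :\ z) cross e s z j <= cut_deg e t' z.
  rewrite /cut_deg [X in _ <= X](bigID (mem (M :\ z))) /=.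
  apply: leq_trans (leq_addl _ _); apply: eq_leq; apply: eq_bigr => j Mj.
  by rewrite /cross (t'_off j Mj) t'_off // !inE eqxx.
have split_s : cut_deg e s z =
    \sum_(j in M :\ z) cross e s z j + \sum_(j | j \notin M :\ z) cross e s z j.
  by rewrite /cut_deg (bigID (mem (M :\ z))).
have := single_move_cut others moved.
lia.
Qed.

(* Key inequality for the price of anarchy: against a strong equilibrium [s],
   any state [t] gains at most the cut-edges of [s] inside the set of
   players on which [t] and [s] differ.  By induction on that set: strong
   stability yields a mover that does not gain, and reverting it applies
   [cut_revert]. *)
Lemma strong_NE_cut_bound (s : state n 2) : strong_NE e s ->
  forall t : state n 2, cut e t <= cut e s + cut_within e s [set i | t i != s i].
Proof.
move=> sne t; have [k] := ubnP #|[set i | t i != s i]|.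
elim: k t => // k IH t; rewrite ltnS; set M := [set i | t i != s i] => sizeM.
have [M0 | [y My]] := set_0Vmem M.
  suff -> : t = s by exact: leq_addr.
  by apply/ffunP => i; apply/eqP; have := in_set0 i; rewrite -M0 inE => /negbFE.
have deviate_M : deviate s M t = t.
  by apply/ffunP => i; rewrite ffunE inE; case: eqVneq.
have [z Mz cost_z] : exists2 z, z \in M & pcost e s z <= pcost e t z.
  by rewrite -deviate_M; apply: sne; apply/set0Pn; exists y.
have no_gain : cut_deg e t z <= cut_deg e s z.
  by have := pcost_cut_deg e s z; have := pcost_cut_deg e t z; lia.
have sizeM' : #|M :\ z| < k by move: sizeM; rewrite (cardsD1 z M) Mz.
have IH' : cut e (revert s t z) <= cut e s + cut_within e s (M :\ z).
  by rewrite -movers_revert; apply: IH; rewrite movers_revert.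
have revert_z : cut e t <= cut e (revert s t z) + 2 * \sum_(j in M :\ z) cross e s z j.
  exact: cut_revert.
have within : cut_within e s M =
    cut_within e s (M :\ z) + 2 * \sum_(j in M :\ z) cross e s z j.
  exact: cut_within_setD1.
lia.
Qed.

Lemma cut_swap (u : state n 2) : cut e [ffun i => swap (u i)] = cut e u.
Proof.
by apply: eq_bigr => i _; apply: eq_bigr => j _; rewrite /cross !ffunE swap_sep.
Qed.

(* With two groups of sizes a and b, at most 2ab <= (a + b)^2 / 2 ordered
   pairs are separated. *)
Lemma cut_le_half_square (u : state n 2) : 2 * cut e u <= n * n.
Proof.
set A := [set i | u i == ord0].
have sep i j : (u i != u j) = (i \in A) (+) (j \in A).
  by rewrite !inE; case: (I2_cases (u i)) => ->; case: (I2_cases (u j)) => ->.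
have row i : \sum_(j < n) ((i \in A) (+) (j \in A) : nat) =
             if i \in A then #|~: A| else #|A|.
  by rewrite !card_indicator; case: (i \in A); apply: eq_bigr => j _; rewrite ?inE.
have crossing : \sum_(i < n) \sum_(j < n) ((i \in A) (+) (j \in A) : nat) =
                #|A| * #|~: A| + #|~: A| * #|A|.
  rewrite (eq_bigr _ (fun i _ => row i)) (bigID (mem A)) /=.
  rewrite (eq_bigr (fun=> #|~: A|)) => [|i ->] //.
  rewrite [X in _ + X](eq_bigr (fun=> #|A|)) => [|i /negbTE ->] //.
  rewrite sum_nat_const (eq_bigl (mem (~: A))) ?sum_nat_const // => i.
  by rewrite !inE.
have cut_le : cut e u <= \sum_(i < n) \sum_(j < n) ((i \in A) (+) (j \in A) : nat).
  apply: leq_sum => i _; apply: leq_sum => j _.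
  by rewrite /cross -sep; case: (~~ e i j).
have := leq_of_leqif (nat_AGM2 #|A| #|~: A|); rewrite cardsC card_ord.
by move: cut_le; rewrite crossing; lia.
Qed.
End TwoMachines.

(* Second claim: [strong_NE_cut_bound] for the optimum and its swapped copy,
   [cut_within_compl], and the bound 2 cut opt <= n^2. *)
Theorem theorem16 (n : nat) (e : rel 'I_n) :
  simple_graph e ->
  (forall s : state n 2, social_optimum e s -> strong_NE e s) /\
  (forall s sopt : state n 2, strong_NE e s -> social_optimum e sopt ->
     3 * scost e s <= 4 * scost e sopt).
Proof.
move=> [e_sym _]; split=> [s | s sopt sne _]; first exact: optimum_is_strong_NE.
set D := [set i | sopt i != s i].
have bound_opt : cut e sopt <= cut e s + cut_within e s D.
  exact: strong_NE_cut_bound.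
have bound_swap : cut e sopt <= cut e s + cut_within e s (~: D).
  have -> : ~: D = [set i | [ffun j => swap (sopt j)] i != s i].
    by apply/setP => i; rewrite !inE ffunE swap_neq negbK.
  by rewrite -(cut_swap e sopt); exact: strong_NE_cut_bound.
have within : cut_within e s D + cut_within e s (~: D) <= cut e s.
  exact: cut_within_compl.
have := cut_le_half_square e sopt; have := scost_cut e s; have := scost_cut e sopt.
lia.
Qed.
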